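(* Let $W_0$ be the set of ordinals $\le \Omega$, where $\Omega$ is the first uncountable ordinal, with the order topology, and let $W=W_0\setminus\{\Omega\}$ with the subspace topology. Then $(C(W,W_0),\tau_\Gamma)$ is not regular.
   Context: For topological spaces $X,Y$, $C(X,Y)$ denotes the set of continuous maps $X\to Y$; each $f\in C(X,Y)$ is identified with its graph $\{(x,f(x)):x\in X\}\subset X\times Y$. For $G$ open in $X\times Y$ let $F_G=\{f\in C(X,Y): f\subset G\}$. The graph topology $\tau_\Gamma$ on $C(X,Y)$ is the topology having the sets $F_G$ ($G$ open in $X\times Y$) as a base. *)

From Stdlib Require Import Classical.



(* A "topology" on X is given by its predicate of open sets. *)
Definition set (X : Type) := X -> Prop.

Definition lbound {T : Type} (lt : T -> T -> Prop) (l : option T) (y : T) : Prop :=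
  match l with Some a => lt a y | None => True end.
Definition ubound {T : Type} (lt : T -> T -> Prop) (r : option T) (y : T) : Prop :=
  match r with Some b => lt y b | None => True end.

(* U is open in the order topology iff every point of U lies in some basic
   interval (l, r) (endpoints optional, i.e. rays / whole space) contained in U. *)
Definition order_open {T : Type} (lt : T -> T -> Prop) (U : set T) : Prop :=
  forall x, U x -> exists l r : option T,
    lbound lt l x /\ ubound lt r x /\
    forall y, lbound lt l y -> ubound lt r y -> U y.

Definition subspace_open {X : Type} (P : X -> Prop) (openX : set X -> Prop)
  (V : set {x : X | P x}) : Prop :=
  exists U, openX U /\ forall z, V z <-> U (proj1_sig z).

Definition prod_open {X Y : Type} (openX : set X -> Prop) (openY : set Y -> Prop)
  (G : set (X * Y)) : Prop :=
  forall p, G p -> exists (U : set X) (V : set Y),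
    openX U /\ openY V /\ U (fst p) /\ V (snd p) /\
    forall x y, U x -> V y -> G (x, y).

Definition continuous {X Y : Type} (openX : set X -> Prop) (openY : set Y -> Prop)
  (f : X -> Y) : Prop :=
  forall V, openY V -> openX (fun x => V (f x)).

Definition Cfun {X Y : Type} (openX : set X -> Prop) (openY : set Y -> Prop) : Type :=
  {f : X -> Y | continuous openX openY f}.

Definition graph_in {X Y : Type} (f : X -> Y) (G : set (X * Y)) : Prop :=
  forall x, G (x, f x).

Definition F_G {X Y : Type} (openX : set X -> Prop) (openY : set Y -> Prop)
  (G : set (X * Y)) : set (Cfun openX openY) :=
  fun f => graph_in (proj1_sig f) G.

(* Graph topology: the topology with base { F_G : G open in X x Y }. *)
Definition graph_open {X Y : Type} (openX : set X -> Prop) (openY : set Y -> Prop)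
  (U : set (Cfun openX openY)) : Prop :=
  forall f, U f -> exists G, prod_open openX openY G /\ F_G openX openY G f /\
    forall g, F_G openX openY G g -> U g.

Definition regular {Z : Type} (openZ : set Z -> Prop) : Prop :=
  forall (C : set Z) (z : Z), openZ (fun w => ~ C w) -> ~ C z ->
    exists U V : set Z, openZ U /\ openZ V /\ U z /\ (forall w, C w -> V w) /\
      (forall w, U w -> V w -> False).

(* ---------- (T, lt) is (order-isomorphic to) the ordinals <= omega_1,
   with Omega = omega_1 its largest element ---------- *)
Definition countable_below {T : Type} (lt : T -> T -> Prop) (a : T) : Prop :=
  exists f : nat -> T, forall x, lt x a -> exists n, f n = x.

Definition is_omega1_plus1 {T : Type} (lt : T -> T -> Prop) (Omega : T) : Prop :=
  (forall x, ~ lt x x) /\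
  (forall x y z, lt x y -> lt y z -> lt x z) /\
  (forall x y, lt x y \/ x = y \/ lt y x) /\
  well_founded lt /\
  (forall x, x <> Omega -> lt x Omega) /\
  (forall a, lt a Omega -> countable_below lt a) /\
  ~ countable_below lt Omega.

(* W0 = [0, Omega] with the order topology; W = W0 \ {Omega} as a subspace. *)
Definition W {T : Type} (Omega : T) : Type := {x : T | x <> Omega}.
Definition W_open {T : Type} (lt : T -> T -> Prop) (Omega : T) : set (W Omega) -> Prop :=
  subspace_open (fun x => x <> Omega) (order_open lt).

From Stdlib Require Import Classical ClassicalEpsilon ProofIrrelevance Cantor.

(* Let [incl] be the inclusion W -> W0 and [C] the set of maps whose graph meets
   the level Omega.  The complement of [C] is the basic open set F_{W x [0,Omega)},
   and [incl] is not in [C].  Suppose open sets U ∋ incl and V ⊇ C were disjoint.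
   U contains some F_H with H open and containing the diagonal.  The key fact
   ([cofinal_fiber]) is that some isolated point x0 of W has a fiber H(x0, -) that
   is cofinal in Omega: otherwise one builds an increasing sequence of isolated
   points whose fibers are bounded below its supremum lam, contradicting that H is
   a neighbourhood of (lam, lam).  Redefining [incl] at the isolated point x0 keeps
   it continuous ([reset_continuous]); the value Omega gives a map of C, hence some
   F_K inside V, and K contains a box around (x0, Omega).  Choosing the new value y
   in that box and in the fiber H(x0, -) gives a map of F_H ∩ F_K ⊆ U ∩ V. *)

Lemma wf_min {T : Type} (lt : T -> T -> Prop) (wf : well_founded lt) (P : T -> Prop) x :
  P x -> exists m, P m /\ forall u, P u -> ~ lt u m.
Proof.
  intros Px. apply NNPP; intro no_min.
  assert (none : forall y, ~ P y).
  { intro y. induction (wf y) as [y _ IH]. intro Py. apply no_min.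
    exists y. split; [exact Py |]. intros u Pu Hu. exact (IH u Hu Pu). }
  exact (none x Px).
Qed.

Lemma dependent_choice {A : Type} (P : A -> Prop) (R : A -> A -> Prop) (a0 : A) :
  P a0 -> (forall a, P a -> exists b, P b /\ R a b) ->
  exists e : nat -> A, forall n, P (e n) /\ R (e n) (e (S n)).
Proof.
  intros P0 step.
  destruct (choice (fun a b => P a -> P b /\ R a b)) as [next Hnext].
  { intro a. destruct (classic (P a)) as [Pa | nPa].
    - destruct (step a Pa) as [b Hb]. exists b. auto.
    - exists a. contradiction. }
  assert (Pe : forall n, P (Nat.iter n next a0)).
  { induction n as [| n IH]; simpl; [exact P0 | apply Hnext, IH]. }
  exists (fun n => Nat.iter n next a0). intro n. split; [apply Pe |]. apply Hnext, Pe.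
Qed.

Lemma subspace_inclusion_continuous {X : Type} (P : X -> Prop) (openX : set X -> Prop) :
  continuous (subspace_open P openX) openX (@proj1_sig X P).
Proof. intros V HV. exists V. split; [exact HV | intro z; reflexivity]. Qed.

Lemma prod_open_strip {X Y : Type} (openX : set X -> Prop) (openY : set Y -> Prop)
  (V : set Y) :
  openX (fun _ => True) -> openY V -> prod_open openX openY (fun p => V (snd p)).
Proof.
  intros HX HV [x y] Vy. exists (fun _ => True), V.
  repeat split; auto.
Qed.

Definition isolated {T : Type} (lt : T -> T -> Prop) (a : T) : Prop :=
  exists p r, lt p a /\ lt a r /\ forall t, lt p t -> lt t r -> t = a.

Section OrderTopology.

Context {T : Type} {lt : T -> T -> Prop}.
Hypothesis lt_irrefl : forall x, ~ lt x x.
Hypothesis lt_trans : forall x y z, lt x y -> lt y z -> lt x z.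
Hypothesis lt_total : forall x y, lt x y \/ x = y \/ lt y x.

Lemma lbound_meet (l1 l2 : option T) (t : T) :
  lbound lt l1 t -> lbound lt l2 t ->
  exists l, lbound lt l t /\ forall y, lbound lt l y -> lbound lt l1 y /\ lbound lt l2 y.
Proof.
  destruct l1 as [a |], l2 as [b |]; simpl; intros H1 H2.
  - destruct (lt_total a b) as [h | [<- | h]].
    + exists (Some b). simpl. split; eauto.
    + exists (Some a). simpl. auto.
    + exists (Some a). simpl. split; eauto.
  - exists (Some a). simpl. auto.
  - exists (Some b). simpl. auto.
  - exists None. simpl. auto.
Qed.

Lemma ubound_meet (r1 r2 : option T) (t : T) :
  ubound lt r1 t -> ubound lt r2 t ->
  exists r, ubound lt r t /\ forall y, ubound lt r y -> ubound lt r1 y /\ ubound lt r2 y.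
Proof.
  destruct r1 as [a |], r2 as [b |]; simpl; intros H1 H2.
  - destruct (lt_total a b) as [h | [<- | h]].
    + exists (Some a). simpl. split; eauto.
    + exists (Some a). simpl. auto.
    + exists (Some b). simpl. split; eauto.
  - exists (Some a). simpl. auto.
  - exists (Some b). simpl. auto.
  - exists None. simpl. auto.
Qed.

Lemma order_open_inter (U V : set T) :
  order_open lt U -> order_open lt V -> order_open lt (fun t => U t /\ V t).
Proof.
  intros HU HV x [Ux Vx].
  destruct (HU x Ux) as (l1 & r1 & Hl1 & Hr1 & inU).
  destruct (HV x Vx) as (l2 & r2 & Hl2 & Hr2 & inV).
  destruct (lbound_meet l1 l2 x Hl1 Hl2) as (l & Hl & meet_l).
  destruct (ubound_meet r1 r2 x Hr1 Hr2) as (r & Hr & meet_r).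
  exists l, r. split; [exact Hl | split; [exact Hr |]].
  intros y Hly Hry. destruct (meet_l y Hly), (meet_r y Hry). auto.
Qed.

Lemma order_open_union (U V : set T) :
  order_open lt U -> order_open lt V -> order_open lt (fun t => U t \/ V t).
Proof.
  intros HU HV x [Ux | Vx].
  - destruct (HU x Ux) as (l & r & Hl & Hr & inU). exists l, r. auto.
  - destruct (HV x Vx) as (l & r & Hl & Hr & inV). exists l, r. auto.
Qed.

Lemma order_open_neq (a : T) : order_open lt (fun t => t <> a).
Proof.
  intros x Hx. destruct (lt_total x a) as [h | [h | h]]; [| contradiction |].
  - exists None, (Some a). simpl. repeat split; auto.
    intros y _ Hy ->. exact (lt_irrefl _ Hy).
  - exists (Some a), None. simpl. repeat split; auto.
    intros y Hy _ ->. exact (lt_irrefl _ Hy).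
Qed.

Lemma order_open_isolated (a : T) (P : Prop) :
  isolated lt a -> order_open lt (fun t => t = a /\ P).
Proof.
  intros (p & r & Hp & Hr & only_a) x [-> HP].
  exists (Some p), (Some r). simpl. repeat split; auto.
Qed.

Lemma order_open_left_interval (V : set T) (m a : T) :
  order_open lt V -> V m -> lt a m ->
  exists b, lt b m /\ forall y, lt b y -> lt y m -> V y.
Proof.
  intros HV Vm Ham. destruct (HV m Vm) as (l & r & Hl & Hr & inV).
  assert (below_r : forall y, lt y m -> ubound lt r y).
  { intros y Hy. destruct r as [r |]; simpl in *; eauto. }
  destruct l as [b |]; simpl in Hl.
  - exists b. split; [exact Hl |]. intros y Hby Hym. apply inV; [exact Hby | auto].
  - exists a. split; [exact Ham |]. intros y _ Hym. apply inV; [exact I | auto].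
Qed.

End OrderTopology.

Section FirstUncountable.

Context {T : Type} {lt : T -> T -> Prop} {Omega : T}.
Hypothesis HT : is_omega1_plus1 lt Omega.

Let lt_irrefl : forall x, ~ lt x x := proj1 HT.
Let lt_trans : forall x y z, lt x y -> lt y z -> lt x z := proj1 (proj2 HT).
Let lt_total : forall x y, lt x y \/ x = y \/ lt y x := proj1 (proj2 (proj2 HT)).
Let lt_wf : well_founded lt := proj1 (proj2 (proj2 (proj2 HT))).
Let countable_below_Omega : forall a, lt a Omega -> countable_below lt a :=
  proj1 (proj2 (proj2 (proj2 (proj2 (proj2 HT))))).
Let Omega_uncountable : ~ countable_below lt Omega :=
  proj2 (proj2 (proj2 (proj2 (proj2 (proj2 HT))))).

Local Notation openW := (W_open lt Omega).
Local Notation openT := (order_open lt).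

Lemma lt_Omega_neq (x : T) : lt x Omega -> x <> Omega.
Proof. intros Hx ->. exact (lt_irrefl _ Hx). Qed.

Lemma exists_below_Omega : exists a, lt a Omega.
Proof.
  apply NNPP; intro none. apply Omega_uncountable.
  exists (fun _ => Omega). intros x Hx. exfalso. eauto.
Qed.

(* Countable sets below Omega are bounded below Omega: otherwise [0, Omega) would be
   a countable union of countable initial segments, enumerated along nat x nat. *)
Lemma countable_bounded (e : nat -> T) :
  (forall n, lt (e n) Omega) -> exists u, lt u Omega /\ forall n, lt (e n) u.
Proof.
  intros e_below. apply NNPP; intro unbounded. apply Omega_uncountable.
  destruct (choice (fun n (f : nat -> T) => forall x, lt x (e n) -> exists k, f k = x))
    as [F HF].
  { intro n. apply countable_below_Omega, e_below. }
  exists (fun k => let (n, m) := of_nat k in match m with 0 => e n | S m' => F n m' end).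
  intros x Hx.
  assert (exists n, ~ lt (e n) x) as [n Hn].
  { apply not_all_ex_not. intro all. apply unbounded. exists x. auto. }
  destruct (lt_total x (e n)) as [h | [-> | h]]; [| | contradiction].
  - destruct (HF n x h) as [k Hk]. exists (to_nat (n, S k)). rewrite cancel_of_to. exact Hk.
  - exists (to_nat (n, 0)). rewrite cancel_of_to. reflexivity.
Qed.

Lemma pair_bounded (b c : T) :
  lt b Omega -> lt c Omega -> exists t, lt b t /\ lt c t /\ lt t Omega.
Proof.
  intros Hb Hc.
  destruct (countable_bounded (fun n => match n with 0 => b | S _ => c end)) as (t & HtO & Ht).
  { intros [| n]; assumption. }
  exists t. split; [exact (Ht 0) | split; [exact (Ht 1) | exact HtO]].
Qed.

Lemma increasing_sup (q : nat -> T) :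
  (forall n, lt (q n) Omega) -> (forall n, lt (q n) (q (S n))) ->
  exists lam, lt lam Omega /\ (forall n, lt (q n) lam) /\
    forall a, lt a lam -> exists n, lt a (q n).
Proof.
  intros q_below q_incr.
  destruct (countable_bounded q q_below) as (u & HuO & Hu).
  destruct (wf_min lt lt_wf (fun v => forall n, lt (q n) v) u Hu) as (lam & above & least).
  exists lam. split; [| split; [exact above |]].
  - destruct (lt_total lam u) as [h | [-> | h]];
      [exact (lt_trans _ _ _ h HuO) | exact HuO | exfalso; exact (least u Hu h)].
  - intros a Ha. destruct (not_all_ex_not _ _ (fun all => least a all Ha)) as [n Hn].
    exists (S n). destruct (lt_total a (q n)) as [h | [-> | h]];
      [exact (lt_trans _ _ _ h (q_incr n)) | apply q_incr | contradiction].
Qed.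

Lemma successor_isolated (t : T) :
  lt t Omega -> exists s, lt t s /\ lt s Omega /\ isolated lt s.
Proof.
  intro HtO.
  destruct (pair_bounded t t HtO HtO) as (u & Htu & _ & HuO).
  destruct (wf_min lt lt_wf (lt t) u Htu) as (s & Hts & s_least).
  assert (HsO : lt s Omega).
  { destruct (lt_total s u) as [h | [-> | h]];
      [exact (lt_trans _ _ _ h HuO) | exact HuO | exfalso; exact (s_least u Htu h)]. }
  destruct (wf_min lt lt_wf (lt s) Omega HsO) as (r & Hsr & r_least).
  exists s. split; [exact Hts | split; [exact HsO |]].
  exists t, r. split; [exact Hts | split; [exact Hsr |]].
  intros v Htv Hvr. destruct (lt_total v s) as [h | [-> | h]];
    [exfalso; exact (s_least v Htv h) | reflexivity | exfalso; exact (r_least v h Hvr)].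
Qed.

Lemma W_ext (x y : W Omega) : proj1_sig x = proj1_sig y -> x = y.
Proof. apply eq_sig_hprop. intros. apply proof_irrelevance. Qed.

Lemma maps_avoiding_Omega_open :
  graph_open openW openT (fun f => ~ exists x, proj1_sig f x = Omega).
Proof.
  intros f Hf. exists (fun p => snd p <> Omega). split; [| split].
  - apply (prod_open_strip _ _ (fun y => y <> Omega)); [| exact (order_open_neq lt_irrefl lt_total Omega)].
    exists (fun _ => True). split; [| tauto]. intros t _. exists None, None. simpl. auto.
  - intros x E. apply Hf. exists x. exact E.
  - intros g Hg [x Hx]. exact (Hg x Hx).
Qed.

Definition reset (a c : T) (x : W Omega) : T :=
  if excluded_middle_informative (proj1_sig x = a) then c else proj1_sig x.

Lemma reset_at (a c : T) (x : W Omega) : proj1_sig x = a -> reset a c x = c.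
Proof. unfold reset. destruct (excluded_middle_informative _); tauto. Qed.

Lemma reset_off (a c : T) (x : W Omega) : proj1_sig x <> a -> reset a c x = proj1_sig x.
Proof. unfold reset. destruct (excluded_middle_informative _); tauto. Qed.

Lemma reset_continuous (a c : T) : isolated lt a -> continuous openW openT (reset a c).
Proof.
  intros iso V HV. exists (fun t => (t = a /\ V c) \/ (t <> a /\ V t)). split.
  - apply order_open_union; [now apply order_open_isolated |].
    apply (order_open_inter lt_trans lt_total); [exact (order_open_neq lt_irrefl lt_total a) | exact HV].
  - intro z. unfold reset. destruct (excluded_middle_informative (proj1_sig z = a)); tauto.
Qed.

Lemma graph_in_reset (G : set (W Omega * T)) (x0 : W Omega) (c : T) :
  G (x0, c) -> (forall x, proj1_sig x <> proj1_sig x0 -> G (x, proj1_sig x)) ->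
  graph_in (reset (proj1_sig x0) c) G.
Proof.
  intros G_x0 G_off x. destruct (classic (proj1_sig x = proj1_sig x0)) as [E | E].
  - rewrite reset_at by exact E. rewrite (W_ext x x0 E). exact G_x0.
  - rewrite reset_off by exact E. exact (G_off x E).
Qed.

Lemma cofinal_fiber (H : set (W Omega * T)) :
  prod_open openW openT H -> (forall x, H (x, proj1_sig x)) ->
  exists x0 : W Omega, isolated lt (proj1_sig x0) /\
    forall b, lt b Omega -> exists y, lt b y /\ lt y Omega /\ H (x0, y).
Proof.
  intros H_open diag. apply NNPP; intro no_fiber.
  assert (bounded_fiber : forall x : W Omega, isolated lt (proj1_sig x) ->
    exists b, lt b Omega /\ forall y, lt b y -> lt y Omega -> ~ H (x, y)).
  { intros x iso. apply NNPP; intro unbounded. apply no_fiber. exists x. split; [exact iso |].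
    intros b Hb. apply NNPP; intro none. apply unbounded. exists b. split; [exact Hb |].
    intros y Hby HyO Hxy. apply none. eauto. }
  set (step := fun t t' => exists s : W Omega, isolated lt (proj1_sig s) /\
    lt t (proj1_sig s) /\ lt (proj1_sig s) t' /\ forall y, lt t' y -> lt y Omega -> ~ H (s, y)).
  destruct exists_below_Omega as [a0 Ha0].
  destruct (dependent_choice (fun t => lt t Omega) step a0 Ha0) as [q Hq].
  { intros t Ht. destruct (successor_isolated t Ht) as (s & Hts & HsO & iso).
    set (sW := exist _ s (lt_Omega_neq s HsO) : W Omega).
    destruct (bounded_fiber sW iso) as (b & HbO & Hb).
    destruct (pair_bounded s b HsO HbO) as (t' & Hst' & Hbt' & Ht'O).
    exists t'. split; [exact Ht'O |]. exists sW. repeat split; auto.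
    intros y Hy HyO. exact (Hb y (lt_trans _ _ _ Hbt' Hy) HyO). }
  assert (q_incr : forall n, lt (q n) (q (S n))).
  { intro n. destruct (Hq n) as [_ (s & _ & H1 & H2 & _)]. exact (lt_trans _ _ _ H1 H2). }
  destruct (increasing_sup q (fun n => proj1 (Hq n)) q_incr) as (lam & HlamO & above & approx).
  set (lamW := exist _ lam (lt_Omega_neq lam HlamO) : W Omega).
  destruct (H_open (lamW, lam) (diag lamW))
    as (U & V & [U' [HU' eqU]] & _ & Ulam & Vlam & box).
  apply eqU in Ulam.
  destruct (order_open_left_interval lt_trans U' lam (q 0) HU' Ulam (above 0))
    as (b & Hb & inU').
  destruct (approx b Hb) as [n Hn].
  destruct (Hq n) as [_ (s & _ & Hqs & Hsq & notH)].
  apply (notH lam (above (S n)) HlamO).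
  apply box; [| exact Vlam]. apply eqU. apply inU'.
  - exact (lt_trans _ _ _ Hn Hqs).
  - exact (lt_trans _ _ _ Hsq (above (S n))).
Qed.

End FirstUncountable.

Theorem mainTheorem2 (T : Type) (lt : T -> T -> Prop) (Omega : T)
  (HT : is_omega1_plus1 lt Omega) :
  ~ regular (graph_open (W_open lt Omega) (order_open lt)).
Proof.
  intro Hreg.
  pose proof HT as (_ & lt_trans & _ & _ & below_Omega & _).
  set (CW := Cfun (W_open lt Omega) (order_open lt)).
  set (incl := exist _ _ (subspace_inclusion_continuous _ (order_open lt)) : CW).
  set (meets_Omega := fun f : CW => exists x, proj1_sig f x = Omega).
  destruct (Hreg meets_Omega incl) as (U & V & HU & HV & U_incl & V_meets & disjoint).
  { exact (maps_avoiding_Omega_open HT). }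
  { intros [x Hx]. exact (proj2_sig x Hx). }
  destruct (HU incl U_incl) as (H & H_open & diag & FH_U).
  destruct (cofinal_fiber HT H H_open diag) as (x0 & iso & fiber).
  set (a := proj1_sig x0).
  (* the inclusion sent to Omega at x0 meets Omega, so F_K ⊆ V for some K ∋ (x0, Omega) *)
  set (h := exist _ _ (reset_continuous HT a Omega iso) : CW).
  assert (h_meets : meets_Omega h) by (exists x0; apply reset_at; reflexivity).
  destruct (HV h (V_meets h h_meets)) as (K & K_open & Kh & FK_V).
  assert (K_x0 : K (x0, Omega)).
  { pose proof (Kh x0) as K_h. simpl in K_h. rewrite reset_at in K_h; auto. }
  destruct (K_open (x0, Omega) K_x0) as (U1 & V1 & _ & HV1 & U1_x0 & V1_Omega & box).
  destruct (order_open_left_interval lt_trans V1 Omega a HV1 V1_Omega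
              (below_Omega a (proj2_sig x0))) as (b & Hb & inV1).
  (* sending x0 to a point y of the fiber beyond b gives a map of F_H ∩ F_K *)
  destruct (fiber b Hb) as (y & Hby & HyO & H_x0y).
  set (g := exist _ _ (reset_continuous HT a y iso) : CW).
  apply (disjoint g).
  - apply FH_U. apply graph_in_reset; [exact H_x0y | intros x _; apply diag].
  - apply FK_V. apply graph_in_reset; [apply box; auto |].
    intros x Hx. rewrite <- (reset_off a Omega x Hx). apply Kh.
Qed.
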